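(* For every integer $k\ge2$, the matrices $A_k=\begin{pmatrix}1&k\\k-1&1\end{pmatrix}$ and $B_k=\begin{pmatrix}1&(k-1)k\\1&1\end{pmatrix}$ are unitally shift equivalent.
   Context: Two square $\mathbb{N}$-matrices $A,B$ are shift equivalent if there are an integer $\ell\ge1$ and rectangular $\mathbb{N}$-matrices $R,S$ with $A^\ell=RS$, $B^\ell=SR$, $AR=RB$, $BS=SA$. Such a shift equivalence $(R,S)$ is unital if there are $m,k\in\mathbb{N}$ with $(B^t)^mR^t\underline{1}=(B^t)^{m+k}\underline{1}$, where $\underline1$ is the all-ones column vector. $A$ and $B$ are unitally shift equivalent if a unital shift equivalence from $A$ to $B$ exists. *)

From mathcomp Require Import all_boot all_algebra.
Set Implicit Arguments. Unset Strict Implicit. Unset Printing Implicit Defensive.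
Import GRing.Theory.
Local Open Scope ring_scope.

Definition ones (n : nat) : 'cV[nat]_n := const_mx 1%N.

Definition shift_equiv_pair (n m : nat) (A : 'M[nat]_n) (B : 'M[nat]_m)
  (l : nat) (R : 'M[nat]_(n, m)) (S : 'M[nat]_(m, n)) : Prop :=
  [/\ (1 <= l)%N, A ^+ l = R *m S, B ^+ l = S *m R,
      A *m R = R *m B & B *m S = S *m A].

Definition unital_pair (n m : nat) (B : 'M[nat]_m) (R : 'M[nat]_(n, m)) : Prop :=
  exists p k : nat, (B^T) ^+ p *m (R^T *m ones n) = (B^T) ^+ (p + k) *m ones m.

Definition unitally_shift_equivalent (n m : nat) (A : 'M[nat]_n) (B : 'M[nat]_m)
  : Prop :=
  exists (l : nat) (R : 'M[nat]_(n, m)) (S : 'M[nat]_(m, n)),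
    shift_equiv_pair A B l R S /\ unital_pair B R.

Definition A_k (k : nat) : 'M[nat]_2 :=
  \matrix_(i < 2, j < 2)
    (if i == j then 1%N else if (i == 0 :> nat) then k else (k - 1)%N).

Definition B_k (k : nat) : 'M[nat]_2 :=
  \matrix_(i < 2, j < 2)
    (if i == j then 1%N else if (i == 0 :> nat) then ((k - 1) * k)%N else 1%N).

From mathcomp Require Import all_boot all_algebra zify ring.
Import GRing.Theory.
Set Implicit Arguments. Unset Strict Implicit. Unset Printing Implicit Defensive.
Local Open Scope ring_scope.
Local Open Scope nat_scope.

(* Write N = (k-1)k and (1 + sqrt N)^n = P_n + Q_n sqrt N.  Then A_k^n and B_k^n
   are [[P, kQ], [(k-1)Q, P]] and [[P, NQ], [Q, P]], so for S = [[k-1, k], [1, 1]]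
   and R = [[Y, kX], [X, (k-1)Y]] we get A_k^l = RS and B_k^l = SR as soon as
   Q_l = X + Y and P_l = (k-1)Y + kX with X, Y natural, i.e. as soon as
   (k-1)Q_l <= P_l <= kQ_l.  For odd l the norm identity P^2 + (N-1)^l = NQ^2
   gives the upper bound, and the lower one once (N-1)^l <= Q_l^2, which holds
   for l = 2(N-1)^2 + 1 since Q_l grows like (N+1)^(l/2).  Unitality is then
   R^T 1 = (Q_l, P_l) = (B_k^T)^(l-1) 1. *)

Definition mx2 (a b c d : nat) : 'M[nat]_2 :=
  \matrix_(i < 2, j < 2) if i == 0 :> nat then (if j == 0 :> nat then a else b)
                          else (if j == 0 :> nat then c else d).

Definition col2 (u v : nat) : 'cV[nat]_2 :=
  \col_(i < 2) if i == 0 :> nat then u else v.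

Lemma mulmx2 a b c d a' b' c' d' :
  mx2 a b c d *m mx2 a' b' c' d' =
  mx2 (a * a' + b * c') (a * b' + b * d') (c * a' + d * c') (c * b' + d * d').
Proof.
apply/matrixP => i j; rewrite !mxE !big_ord_recr big_ord0 /= !mxE.
by case: i => [[|[|//]] ?]; case: j => [[|[|//]] ?] /=; rewrite add0r.
Qed.

Lemma mulmx_col2 a b c d u v :
  mx2 a b c d *m col2 u v = col2 (a * u + b * v) (c * u + d * v).
Proof.
apply/matrixP => i j; rewrite !mxE !big_ord_recr big_ord0 /= !mxE.
by case: i => [[|[|//]] ?]; rewrite add0r.
Qed.

Lemma trmx2 a b c d : (mx2 a b c d)^T = mx2 a c b d.
Proof. by apply/matrixP => -[[|[|//]] ?] [[|[|//]] ?]; rewrite !mxE. Qed.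

Lemma mx2_id : mx2 1 0 0 1 = 1%R.
Proof. by apply/matrixP => -[[|[|//]] ?] [[|[|//]] ?]; rewrite !mxE. Qed.

Lemma ones2 : ones 2 = col2 1 1.
Proof. by apply/matrixP => -[[|[|//]] ?] j; rewrite !mxE. Qed.

Lemma A_kE c : A_k c.+1 = mx2 1 c.+1 c 1.
Proof. by apply/matrixP => -[[|[|//]] ?] [[|[|//]] ?]; rewrite !mxE /= ?subn1. Qed.

Lemma B_kE c : B_k c.+1 = mx2 1 (c * c.+1) 1 1.
Proof. by apply/matrixP => -[[|[|//]] ?] [[|[|//]] ?]; rewrite !mxE /= ?subn1. Qed.

(* (1 + sqrt N)^n = (pell N n).1 + (pell N n).2 * sqrt N *)
Fixpoint pell (N n : nat) : nat * nat :=
  if n is n'.+1 then let: (p, q) := pell N n' in (p + N * q, p + q)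
  else (1, 0).

Lemma pellS N n :
  pell N n.+1 = ((pell N n).1 + N * (pell N n).2, (pell N n).1 + (pell N n).2).
Proof. by rewrite /=; case: (pell N n). Qed.

Lemma unitdiag_mx2_exp a b n :
  (mx2 1 a b 1 ^+ n)%R = mx2 (pell (a * b) n).1 (a * (pell (a * b) n).2)
                              (b * (pell (a * b) n).2) (pell (a * b) n).1.
Proof.
elim: n => [|n IHn]; first by rewrite expr0 /= !muln0 mx2_id.
by rewrite exprS -mulmxE IHn mulmx2 pellS /=; congr mx2; ring.
Qed.

Lemma pell_norm N n :
  (((pell N n).1 ^ 2)%N%:Z - (N * (pell N n).2 ^ 2)%N%:Z = (1 - N%:Z) ^+ n)%R.
Proof.
elim: n => [|n IHn]; first by rewrite /= muln0 expr0.
by rewrite pellS exprS -IHn /= !(PoszD, PoszM, natrXE); ring.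
Qed.

Lemma pell_norm_odd a n : odd n ->
  (pell a.+1 n).1 ^ 2 + a ^ n = a.+1 * (pell a.+1 n).2 ^ 2.
Proof.
move=> odd_n; have := pell_norm a.+1 n.
have -> : (1 - a.+1%:Z = - a%:Z)%R by rewrite -addn1 PoszD opprD addrCA subrr addr0.
rewrite exprNn -signr_odd odd_n expr1 mulN1r -natrXE => norm_eq.
by apply/eqP; rewrite -eqz_nat PoszD; apply/eqP; lia.
Qed.

Lemma pell_snd_SS_ge N n : N.+1 * (pell N n).2 <= (pell N n.+2).2.
Proof. rewrite !pellS /=; nia. Qed.

Lemma pell_snd_odd_ge N j : N.+1 ^ j <= (pell N j.*2.+1).2.
Proof.
elim: j => [|j IHj] //.
by rewrite expnS doubleS (leq_trans _ (pell_snd_SS_ge N _)) // leq_mul2l IHj orbT.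
Qed.

Lemma bernoulli_expn a b n : a ^ n * (a + n * b) <= a * (a + b) ^ n.
Proof.
elim: n => [|n IHn]; first by rewrite !expn0 mul1n muln1 addn0.
have le_pow : a ^ n <= (a + b) ^ n.
  by elim: {IHn} n => // n IHn; rewrite !expnS leq_mul // leq_addr.
rewrite !expnS; nia.
Qed.

Lemma expn_le_expn_add2 a : a ^ (2 * a ^ 2).+1 <= (a + 2) ^ (2 * a ^ 2).
Proof.
case: a => [|a] //; rewrite -(leq_pmul2l (ltn0Sn a)).
apply: leq_trans (bernoulli_expn _ 2 _); rewrite expnS mulnA mulnC leq_mul2l.
by apply/orP; right; nia.
Qed.

Lemma pell_snd_sqr_ge a : a ^ (2 * a ^ 2).+1 <= (pell a.+1 (2 * a ^ 2).+1).2 ^ 2.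
Proof.
apply: leq_trans (expn_le_expn_add2 a) _.
have := pell_snd_odd_ge a.+1 (a ^ 2); rewrite -mul2n addn2.
by rewrite mulnC expnM leq_sqr.
Qed.

Lemma sqrt_approx_bounds c P Q M : 0 < c ->
  P ^ 2 + M = c * c.+1 * Q ^ 2 -> M <= Q ^ 2 -> c * Q <= P <= c.+1 * Q.
Proof.
move=> c_gt0 norm_eq M_le; apply/andP; split; rewrite -leq_sqr expnMn; nia.
Qed.

Lemma mul_between_decomp c P Q : c * Q <= P <= c.+1 * Q ->
  exists X Y, Q = X + Y /\ P = c * Y + c.+1 * X.
Proof.
case/andP=> lo hi; have [X P_eq] : exists X, P = c * Q + X.
  by exists (P - c * Q); rewrite subnKC.
have [Y Q_eq] : exists Y, Q = X + Y.
  by exists (Q - X); rewrite subnKC //; nia.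
by exists X, Y; split=> //; rewrite P_eq Q_eq; ring.
Qed.

Section PellDecomposition.

Variables (c l X Y : nat).
Hypothesis pell_decomp : pell (c * c.+1) l = (c * Y + c.+1 * X, X + Y).

Let R := mx2 Y (c.+1 * X) X (c * Y).
Let S := mx2 c c.+1 1 1.

Lemma shift_equiv_pair_pell_decomp : 0 < l ->
  shift_equiv_pair (mx2 1 c.+1 c 1) (mx2 1 (c * c.+1) 1 1) l R S.
Proof.
move=> l_gt0; split=> //; rewrite /R /S ?unitdiag_mx2_exp ?mulmx2.
- by rewrite [c.+1 * c]mulnC pell_decomp /=; congr mx2; ring.
- by rewrite muln1 pell_decomp /=; congr mx2; ring.
- by congr mx2; ring.
- by congr mx2; ring.
Qed.

Lemma unital_pair_pell_decomp : 0 < l -> unital_pair (mx2 1 (c * c.+1) 1 1) R.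
Proof.
case: l pell_decomp => // n; rewrite pellS => -[P_eq Q_eq] _.
exists 0, n; rewrite expr0 mul1mx add0n !trmx2 ones2 unitdiag_mx2_exp mul1n.
by rewrite !mulmx_col2 /R; congr col2; nia.
Qed.

End PellDecomposition.

Theorem mainTheorem10 (k : nat) : (2 <= k)%N ->
  unitally_shift_equivalent (A_k k) (B_k k).
Proof.
case: k => [|c] //; rewrite ltnS => c_gt0; rewrite A_kE B_kE.
set a := (c * c.+1).-1; set l := (2 * a ^ 2).+1.
have N_eq : c * c.+1 = a.+1 by rewrite prednK // muln_gt0 c_gt0.
have bounds : c * (pell (c * c.+1) l).2 <= (pell (c * c.+1) l).1
              <= c.+1 * (pell (c * c.+1) l).2.
  apply: (@sqrt_approx_bounds _ _ _ (a ^ l) c_gt0); rewrite N_eq.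
    by apply: pell_norm_odd; rewrite /= oddM.
  exact: pell_snd_sqr_ge.
have [X [Y [Q_eq P_eq]]] := mul_between_decomp bounds.
have pell_decomp : pell (c * c.+1) l = (c * Y + c.+1 * X, X + Y).
  by rewrite -P_eq -Q_eq -surjective_pairing.
exists l, (mx2 Y (c.+1 * X) X (c * Y)), (mx2 c c.+1 1 1); split.
- exact: shift_equiv_pair_pell_decomp pell_decomp _.
- exact: unital_pair_pell_decomp pell_decomp _.
Qed.
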